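(* Let $S=\{1,\dots,n\}$, $C=\{1,\dots,m\}$, bandwidths $\mathcal{U}=(U_s)_{s\in S}$ with $U_s>0$, memory sizes $\mathcal{D}=(d_s)_{s\in S}$ with integers $d_s\ge1$, and popularities $\Lambda=(\lambda_c)_{c\in C}$ with $\lambda_c\ge 0$. Let $\mathtt{JAM}^*(\mathcal{U},\Lambda,\mathcal{D})$ denote the optimal value of \[ \max_{Z=(z_{sc})}\ \sum_{s\in S}\sum_{c\in C} z_{sc}\ \text{ s.t. } \sum_{c}z_{sc}\le U_s\ \forall s,\ \sum_{s}z_{sc}\le\lambda_c\ \forall c,\ \sum_{c}\mathbb{1}(z_{sc}>0)\le d_s\ \forall s,\ z_{sc}\ge 0. \] Consider the following \texttt{greedy} algorithm. Initialize $\mathsf{flow}(s)=U_s$, $\mathsf{deg}(s)=d_s$ for all $s\in S$, $\mathsf{flow}(c)=\lambda_c$ for all $c\in C$, and $z_{sc}=0$, $a_{sc}=0$ for all $(s,c)$. While there exists $(s,c)\in S\times C$ with $\mathsf{flow}(s)\,\mathsf{deg}(s)\,\mathsf{flow}(c)>0$: choose $s^*\in\arg\max_{s\in S:\mathsf{deg}(s)>0}\mathsf{flow}(s)$ and $c^*\in\arg\max_{c\in C}\mathsf{flow}(c)$ (ties broken arbitrarily), set $f=\min(\mathsf{flow}(s^* ),\mathsf{flow}(c^* ))$, decrease $\mathsf{flow}(s^* )$ and $\mathsf{flow}(c^* )$ by $f$, decrease $\mathsf{deg}(s^* )$ by $1$, and set $a_{s^*c^*}=1$, $z_{s^*c^*}=f$.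 The output value of the algorithm is the total matched flow $\sum_{s,c}z_{sc}$ (the sum of the values $f$ over all iterations). Then the output value of \texttt{greedy} on this instance is at least $\frac{1}{2}\mathtt{JAM}^*(\mathcal{U},\Lambda,\mathcal{D})$.
   Context: $\mathbb{1}(\cdot)$ denotes the indicator function. *)

From HB Require Import structures.
From mathcomp Require Import all_boot all_order all_algebra.
Set Implicit Arguments. Unset Strict Implicit. Unset Printing Implicit Defensive.
Import Order.TTheory GRing.Theory Num.Theory.
Local Open Scope ring_scope.

Section JAM.
Variables (R : realFieldType) (n m : nat).

Definition jam_feasible (U : 'I_n -> R) (lam : 'I_m -> R) (d : 'I_n -> nat)
    (z : 'I_n -> 'I_m -> R) : Prop :=
  (forall s c, 0 <= z s c) /\
  (forall s, \sum_(c < m) z s c <= U s) /\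
  (forall c, \sum_(s < n) z s c <= lam c) /\
  (forall s, (#|[set c : 'I_m | (0 < z s c)%R]| <= d s)%N).

Definition jam_value (z : 'I_n -> 'I_m -> R) : R := \sum_(s < n) \sum_(c < m) z s c.

Record gstate := GState {
  flowS : 'I_n -> R;
  degS  : 'I_n -> nat;
  flowC : 'I_m -> R;
  zz    : 'I_n -> 'I_m -> R }.

Definition ginit (U : 'I_n -> R) (lam : 'I_m -> R) (d : 'I_n -> nat) : gstate :=
  GState U d lam (fun _ _ => 0).

Definition gactive (st : gstate) : Prop :=
  exists s c, 0 < flowS st s * (degS st s)%:R * flowC st c.

Definition gstep (st st' : gstate) : Prop :=
  gactive st /\
  exists (s : 'I_n) (c : 'I_m),
    (0 < degS st s)%N /\
    (forall s', (0 < degS st s')%N -> flowS st s' <= flowS st s) /\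
    (forall c', flowC st c' <= flowC st c) /\
    let f := Num.min (flowS st s) (flowC st c) in
    st' = GState
      (fun s' => if s' == s then flowS st s' - f else flowS st s')
      (fun s' => if s' == s then (degS st s').-1 else degS st s')
      (fun c' => if c' == c then flowC st c' - f else flowC st c')
      (fun s' c' => if (s' == s) && (c' == c) then f else zz st s' c').

Inductive greach (st0 : gstate) : gstate -> Prop :=
  | greach_refl : greach st0 st0
  | greach_step st st' : greach st0 st -> gstep st st' -> greach st0 st'.

End JAM.

(* Let F be the residual popularities when greedy halts, and split a feasible z
   as min(z, F) + (z - min(z, F)).  Server s has at most d_s contents with
   z_sc > 0, and either its bandwidth is exhausted or d_s F_c is at most the
   bandwidth greedy used at s (F = 0 if s still has memory, by the stopping rule;
   otherwise by the invariant [used_ge_flowC]); so the first part is at most the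
   greedy value.  For each content c, sum_s (z_sc - F_c)^+ <= lam_c - F_c, the
   flow greedy sent to c; so the second part is at most the greedy value too. *)

From HB Require Import structures.
From mathcomp Require Import all_boot all_order all_algebra.
From mathcomp Require Import lra zify.
Set Implicit Arguments. Unset Strict Implicit. Unset Printing Implicit Defensive.
Import Order.TTheory GRing.Theory Num.Theory.
Local Open Scope ring_scope.

Lemma sumr_update (R : numDomainType) (I : finType) (g : I -> R) (i0 : I) (v : R) :
  \sum_i (if i == i0 then v else g i) = \sum_i g i + (v - g i0).
Proof.
rewrite (bigD1 i0) //= eqxx [in RHS](bigD1 i0) //= addrAC addrCA subrr addr0.
by congr (_ + _); apply: eq_bigr => i /negbTE ->.
Qed.

Lemma sumr_update_subr (R : numDomainType) (I : finType) (g : I -> R) (i0 : I) (v : R) :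
  \sum_i (if i == i0 then g i - v else g i) = \sum_i g i - v.
Proof.
transitivity (\sum_i (if i == i0 then g i0 - v else g i)).
  by apply: eq_bigr => i _; case: eqP => [->|].
by rewrite sumr_update addrAC subrr add0r.
Qed.

Lemma sum_min_le_card (R : realDomainType) (I : finType) (x t : I -> R) (k : nat) (K : R) :
  (#|[set i | (0 < x i)%R]| <= k)%N -> (forall i, k%:R * t i <= K) -> 0 <= K ->
  \sum_i Num.min (x i) (t i) <= K.
Proof.
move=> card_le kt_le K_ge0.
have sum_le : \sum_i Num.min (x i) (t i) <= \sum_(i | 0 < x i) t i.
  rewrite [leRHS]big_mkcond /=; apply: ler_sum => i _.
  by case: ifP => [_|/negbT]; rewrite ge_min ?lexx ?orbT // -leNgt => ->.
apply: le_trans sum_le _.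
have [k0|k_gt0] := posnP k.
  move: card_le; rewrite k0 leqn0 cards_eq0 => /eqP P0.
  by rewrite big_pred0 // => i; rewrite -(in_set0 i) -P0 inE.
have k_pos : (0 : R) < k%:R by rewrite ltr0n.
rewrite -(ler_pM2l k_pos) mulr_sumr.
apply: le_trans (ler_sum _ (fun i _ => kt_le i)) _.
by rewrite sumr_const mulr_natl ler_wpMn2l // -cardsE.
Qed.

Lemma sum_sub_min_le (R : realDomainType) (I : finType) (x : I -> R) (t L : R) :
  (forall i, 0 <= x i) -> \sum_i x i <= L -> 0 <= t <= L ->
  \sum_i (x i - Num.min (x i) t) <= L - t.
Proof.
move=> x_ge0 sum_le /andP[t_ge0 t_le].
case: (pickP (fun i => t < x i)) => [i0 xi0_gt | x_le]; last first.
  by rewrite big1 ?subr_ge0 // => i _; rewrite min_l ?subrr // leNgt x_le.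
rewrite (bigD1 i0) //= min_r ?(ltW xi0_gt) //.
have rest_le : \sum_(i | i != i0) (x i - Num.min (x i) t) <= \sum_(i | i != i0) x i.
  by apply: ler_sum => i _; rewrite gerBl le_min x_ge0.
move: sum_le; rewrite (bigD1 i0) //=; lra.
Qed.

Section GreedyInvariant.
Variables (R : realFieldType) (n m : nat).
Variables (U : 'I_n -> R) (d : 'I_n -> nat) (lam : 'I_m -> R).

Definition gupdate (st : gstate R n m) (s : 'I_n) (c : 'I_m) : gstate R n m :=
  let f := Num.min (flowS st s) (flowC st c) in
  GState
    (fun s' => if s' == s then flowS st s' - f else flowS st s')
    (fun s' => if s' == s then (degS st s').-1 else degS st s')
    (fun c' => if c' == c then flowC st c' - f else flowC st c')
    (fun s' c' => if (s' == s) && (c' == c) then f else zz st s' c').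

Lemma gstepE (st st' : gstate R n m) : gstep st st' ->
  gactive st /\ exists s c, [/\ (0 < degS st s)%N,
    forall s', (0 < degS st s')%N -> flowS st s' <= flowS st s,
    forall c', flowC st c' <= flowC st c & st' = gupdate st s c].
Proof. by move=> [act [s [c [? [? [? ->]]]]]]; split=> //; exists s, c. Qed.

Record greedy_inv (st : gstate R n m) : Prop := GreedyInv {
  flowS_bounds : forall s, 0 <= flowS st s <= U s;
  degS_le : forall s, (degS st s <= d s)%N;
  flowC_bounds : forall c, 0 <= flowC st c <= lam c;
  (* A server with bandwidth left has only been matched to contents it exhausted,
     each of which then had the largest residual popularity. *)
  used_ge_flowC : forall s, 0 < flowS st s ->
    forall c, (d s - degS st s)%:R * flowC st c <= U s - flowS st s;
  zz_unmatched : forall s c, 0 < flowS st s -> 0 < flowC st c -> zz st s c = 0;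
  value_flowS : jam_value (zz st) = \sum_s (U s - flowS st s);
  value_flowC : jam_value (zz st) = \sum_c (lam c - flowC st c) }.

Lemma jam_value_update (z : 'I_n -> 'I_m -> R) s0 c0 v :
  jam_value (fun s c => if (s == s0) && (c == c0) then v else z s c)
  = jam_value z + (v - z s0 c0).
Proof.
rewrite /jam_value (eq_bigr (fun s =>
  if s == s0 then \sum_c z s0 c + (v - z s0 c0) else \sum_c z s c)).
  by rewrite sumr_update addrAC subrr add0r.
by move=> s _; case: eqP => [->|_] /=; rewrite -?sumr_update.
Qed.

Lemma greedy_inv_init : (forall s, 0 < U s) -> (forall c, 0 <= lam c) ->
  greedy_inv (ginit U lam d).
Proof.
move=> U_gt0 lam_ge0; split=> //= [s|c|s _ c||].
- by rewrite lexx ltW.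
- by rewrite lexx lam_ge0.
- by rewrite subnn mul0r subrr.
all: by rewrite /jam_value big1 => [|s _]; rewrite ?big1 // => i _; rewrite subrr.
Qed.

Lemma gactive_witness (st : gstate R n m) : greedy_inv st -> gactive st ->
  exists s c, [/\ 0 < flowS st s, (0 < degS st s)%N & 0 < flowC st c].
Proof.
move=> Ist [s [c prod_gt0]]; exists s, c.
have /andP[fS_ge0 _] := flowS_bounds Ist s.
have /andP[fC_ge0 _] := flowC_bounds Ist c.
move: prod_gt0; rewrite lt0r !mulf_eq0 !negb_or -!andbA => /and4P[fS_neq0 deg_neq0 fC_neq0 _].
by rewrite !lt0r fS_neq0 fC_neq0 fS_ge0 fC_ge0 lt0n -(pnatr_eq0 R).
Qed.

Section GreedyStep.
Variables (st : gstate R n m) (s0 : 'I_n) (c0 : 'I_m).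
Hypothesis Ist : greedy_inv st.
Hypothesis flowS_s0_gt0 : 0 < flowS st s0.
Hypothesis flowC_c0_gt0 : 0 < flowC st c0.
Hypothesis degS_s0_gt0 : (0 < degS st s0)%N.
Hypothesis flowC_c0_max : forall c, flowC st c <= flowC st c0.

Let f := Num.min (flowS st s0) (flowC st c0).
Let st' := gupdate st s0 c0.

Let f_ge0 : 0 <= f. Proof. by rewrite le_min !ltW. Qed.
Let f_leS : f <= flowS st s0. Proof. by rewrite ge_min lexx. Qed.
Let f_leC : f <= flowC st c0. Proof. by rewrite ge_min lexx orbT. Qed.

Lemma gupdate_flowS_le s : flowS st' s <= flowS st s.
Proof. by rewrite /=; case: eqP; rewrite // gerBl. Qed.

Lemma gupdate_flowC_le c : flowC st' c <= flowC st c.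
Proof. by rewrite /=; case: eqP; rewrite // gerBl. Qed.

Lemma gupdate_used_ge_flowC s : 0 < flowS st' s ->
  forall c, (d s - degS st' s)%:R * flowC st' c <= U s - flowS st' s.
Proof.
move=> + c; have flowC'_le := gupdate_flowC_le c.
have [-> | s_neq] := eqVneq s s0 => flowS'_gt0; last first.
  have flowS'E : flowS st' s = flowS st s by rewrite /st' /= (negbTE s_neq).
  have degS'E : degS st' s = degS st s by rewrite /st' /= (negbTE s_neq).
  rewrite flowS'E degS'E in flowS'_gt0 *.
  apply: le_trans (used_ge_flowC Ist flowS'_gt0 c).
  by rewrite ler_wpM2l ?ler0n.
have flowS'E : flowS st' s0 = flowS st s0 - f by rewrite /st' /= eqxx.
have degS'E : degS st' s0 = (degS st s0).-1 by rewrite /st' /= eqxx.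
rewrite flowS'E degS'E in flowS'_gt0 *.
have f_eqC : f = flowC st c0.
  by move: flowS'_gt0; rewrite /f; case: (leP (flowS st s0)) => _; rewrite ?subrr ?ltxx.
have -> : (d s0 - (degS st s0).-1 = (d s0 - degS st s0).+1)%N.
  by have := degS_le Ist s0; lia.
rewrite -addn1 natrD mulrDl mul1r.
have used_le := used_ge_flowC Ist flowS_s0_gt0 c.
have := ler_wpM2l (ler0n R (d s0 - degS st s0)) flowC'_le.
have := flowC_c0_max c.
lra.
Qed.

Lemma gupdate_zz_unmatched s c :
  0 < flowS st' s -> 0 < flowC st' c -> zz st' s c = 0.
Proof.
move=> flowS'_gt0 flowC'_gt0; rewrite /st' /=; case: ifP => [/andP[/eqP eq_s /eqP eq_c] | _].
  move: flowS'_gt0 flowC'_gt0; rewrite eq_s eq_c /st' /= !eqxx /f.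
  by case: (leP (flowS st s0)) => _; rewrite subrr ltxx // andbF.
apply: (zz_unmatched Ist).
  exact: lt_le_trans flowS'_gt0 (gupdate_flowS_le s).
exact: lt_le_trans flowC'_gt0 (gupdate_flowC_le c).
Qed.

Lemma gupdate_value : jam_value (zz st') = jam_value (zz st) + f.
Proof.
by rewrite /st' /= jam_value_update (zz_unmatched Ist flowS_s0_gt0 flowC_c0_gt0) subr0.
Qed.

Lemma gupdate_inv : greedy_inv st'.
Proof.
split.
- move=> s; rewrite /st' /=; case: eqP => [->|_]; last exact: flowS_bounds Ist s.
  have /andP[_ flowS_le] := flowS_bounds Ist s0.
  by rewrite -/f subr_ge0 f_leS (le_trans _ flowS_le) // gerBl.
- move=> s; rewrite /st' /=; case: eqP => _; last exact: degS_le Ist s.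
  exact: leq_trans (leq_pred _) (degS_le Ist s).
- move=> c; rewrite /st' /=; case: eqP => [->|_]; last exact: flowC_bounds Ist c.
  have /andP[_ flowC_le] := flowC_bounds Ist c0.
  by rewrite -/f subr_ge0 f_leC (le_trans _ flowC_le) // gerBl.
- exact: gupdate_used_ge_flowC.
- exact: gupdate_zz_unmatched.
- by rewrite gupdate_value (value_flowS Ist) /st' /= !sumrB sumr_update_subr opprB addrA addrAC.
- by rewrite gupdate_value (value_flowC Ist) /st' /= !sumrB sumr_update_subr opprB addrA addrAC.
Qed.

End GreedyStep.

Lemma gstep_inv (st st' : gstate R n m) :
  greedy_inv st -> gstep st st' -> greedy_inv st'.
Proof.
move=> Ist /gstepE[act [s [c [degS_gt0 flowS_max flowC_max ->]]]].
have [s1 [c1 [flowS1_gt0 degS1_gt0 flowC1_gt0]]] := gactive_witness Ist act.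
apply: gupdate_inv => //.
  exact: lt_le_trans flowS1_gt0 (flowS_max s1 degS1_gt0).
exact: lt_le_trans flowC1_gt0 (flowC_max c1).
Qed.

Lemma greach_inv (st : gstate R n m) : (forall s, 0 < U s) -> (forall c, 0 <= lam c) ->
  greach (ginit U lam d) st -> greedy_inv st.
Proof.
move=> U_gt0 lam_ge0; elim=> [|st1 st2 _ Ist1 /(gstep_inv Ist1)] //.
exact: greedy_inv_init.
Qed.

Lemma halted_flowC_le (st : gstate R n m) : greedy_inv st -> ~ gactive st ->
  forall s, 0 < flowS st s -> forall c, (d s)%:R * flowC st c <= U s - flowS st s.
Proof.
move=> Ist halted s flowS_gt0 c.
have [degS0|degS_gt0] := posnP (degS st s).
  by have := used_ge_flowC Ist flowS_gt0 c; rewrite degS0 subn0.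
have flowC0 : flowC st c = 0.
  have /andP[flowC_ge0 _] := flowC_bounds Ist c.
  apply/eqP; rewrite eq_le flowC_ge0 andbT leNgt; apply/negP => flowC_gt0.
  by apply: halted; exists s, c; rewrite !mulr_gt0 // ltr0n.
by have /andP[_ flowS_le] := flowS_bounds Ist s; rewrite flowC0 mulr0 subr_ge0.
Qed.

Lemma halted_sum_min_le (st : gstate R n m) (z : 'I_n -> 'I_m -> R) :
  greedy_inv st -> ~ gactive st -> jam_feasible U lam d z ->
  forall s, \sum_c Num.min (z s c) (flowC st c) <= U s - flowS st s.
Proof.
move=> Ist halted [_ [z_le_U [_ z_card]]] s.
have /andP[flowS_ge0 flowS_le] := flowS_bounds Ist s.
have [flowS_gt0|flowS_le0] := ltrP 0 (flowS st s).
  apply: sum_min_le_card (z_card s) (halted_flowC_le Ist halted flowS_gt0) _.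
  by rewrite subr_ge0.
have -> : flowS st s = 0 by apply/eqP; rewrite eq_le flowS_le0.
rewrite subr0; apply: le_trans (z_le_U s); apply: ler_sum => c _.
by rewrite ge_min lexx.
Qed.

End GreedyInvariant.

Theorem theorem2 (R : realFieldType) (n m : nat)
    (U : 'I_n -> R) (d : 'I_n -> nat) (lam : 'I_m -> R)
    (hU : forall s, 0 < U s) (hd : forall s, (1 <= d s)%N)
    (hlam : forall c, 0 <= lam c)
    (final : gstate R n m)
    (hrun : greach (ginit U lam d) final) (hstop : ~ gactive final)
    (z : 'I_n -> 'I_m -> R) (hz : jam_feasible U lam d z) :
  jam_value z / 2 <= jam_value (zz final).
Proof.
have Ifinal := greach_inv hU hlam hrun.
set F := flowC final.
have split_z : jam_value z = \sum_s \sum_c Num.min (z s c) (F c)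
                             + \sum_c \sum_s (z s c - Num.min (z s c) (F c)).
  rewrite [X in _ + X]exchange_big -big_split; apply: eq_bigr => s _.
  by rewrite -big_split; apply: eq_bigr => c _ /=; rewrite addrC subrK.
have servers_le : \sum_s \sum_c Num.min (z s c) (F c) <= jam_value (zz final).
  rewrite (value_flowS Ifinal); apply: ler_sum => s _.
  exact: halted_sum_min_le Ifinal hstop hz s.
have contents_le : \sum_c \sum_s (z s c - Num.min (z s c) (F c)) <= jam_value (zz final).
  case: hz => z_ge0 [_ [z_le_lam _]].
  rewrite (value_flowC Ifinal); apply: ler_sum => c _.
  exact: sum_sub_min_le (z_ge0^~ c) (z_le_lam c) (flowC_bounds Ifinal c).
rewrite split_z; lra.
Qed.
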